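(* Let $\mathcal{M}$ be a class of $\mathcal{L}$-structures and $\Sigma$ a class of formulas of $\mathcal{L}_A$ containing all atomic formulas and closed under subformulas. If $p$ is a condition of the forcing property $\mathcal{P}(\mathcal{M},\Sigma)$ and $\sigma$ is a sentence of $\Sigma(C)$, then $F^w_p(\sigma)=H^w_p(\sigma)$.
   Context: $\mathcal{L}$ is a countable continuous signature; formulas of $\mathcal{L}_{\omega_1,\omega}$ are built from atomic formulas using $\neg$ ($1-x$), $\tfrac12$, $\dotplus$ ($\min(x+y,1)$), countable conjunctions $\bigwedge$ (infimum) and $\inf_x$, with values in $[0,1]$. $\mathcal{L}_A$ is a countable fragment. $C=\{c_i:i<\omega\}$ are new constants. $\mathcal{M}(C)$ is the class of structures $(M,a_c)_{c\in C_0}$ with $M\in\mathcal{M}$, $C_0\subseteq C$ finite. $\Sigma(C)$ is the set of formulas obtained from formulas of $\Sigma$ by replacing finitely many free variables by constants from $C$. The forcing property $\mathcal{P}(\mathcal{M},\Sigma)=(\mathbb{P},\le,f)$: conditions are finite sets $\{\phi_1<r_1,\dots,\phi_n<r_n\}$ with $\phi_i\in\Sigma(C)$ sentences such that some $M\in\mathcal{M}(C)$ has $\phi_i^M<r_i$ for all $i$; $p\le q$ iff $p\supseteq q$; for an atomic sentence $\phi$, $f_p(\phi)=\min\{r\le1:(\phi<r)\in p\}$ if nonempty, else $1$. Forcing values on sentences: $F_p(\varphi)=f_p(\varphi)$ for atomic $\varphi$; $F_p(\neg\varphi)=1-\inf_{q\le p}F_q(\varphi)$; $F_p(\tfrac12\varphi)=\tfrac12F_p(\varphi)$;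 $F_p(\varphi\dotplus\psi)=\min(F_p(\varphi)+F_p(\psi),1)$; $F_p(\bigwedge\Phi)=\inf_{\varphi\in\Phi}F_p(\varphi)$; $F_p(\inf_x\varphi)=\inf_{c\in C}F_p(\varphi(c))$; $F^w_p(\varphi)=\sup_{q\le p}\inf_{q'\le q}F_{q'}(\varphi)$. For a sentence $\varphi\in\Sigma(C)$, $H_p(\varphi)=\min\{r\le1:(\varphi<r)\in p\}$ if nonempty, else $1$; $H^w_p(\varphi)=\sup_{q\le p}\inf_{q'\le q}H_{q'}(\varphi)$. *)

From Stdlib Require Import Reals Lra List Classical ClassicalEpsilon
  FunctionalExtensionality.
From Stdlib Require Fin.
Import ListNotations.
Open Scope R_scope.

Set Implicit Arguments.

(* Inf E is the greatest lower bound of E when E is nonempty and        *)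
(* bounded below; otherwise 1 (the convention for an empty infimum of   *)
(* [0,1]-values; all sets used below of values in [0,1] that are        *)
(* nonempty are bounded).  Sup E is the least upper bound when E is     *)
(* nonempty and bounded above, otherwise 0.                             *)

Definition Sup (E : R -> Prop) : R :=
  match excluded_middle_informative (bound E /\ exists x, E x) with
  | left h => proj1_sig (completeness E (proj1 h) (proj2 h))
  | right _ => 0
  end.

Definition bounded_below (E : R -> Prop) : Prop :=
  exists m, forall x, E x -> m <= x.

Definition Inf (E : R -> Prop) : R :=
  match excluded_middle_informative (bounded_below E /\ exists x, E x) with
  | left _ => - Sup (fun x => E (- x))
  | right _ => 1
  end.

(* A countable continuous signature: function and relation symbols with
   arities and moduli of uniform continuity.  The distance symbol d is
   built in (constructor FDist below). *)
Record Sig : Type := {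
  fsym : Type;
  rsym : Type;
  farity : fsym -> nat;
  rarity : rsym -> nat;
  fmod : fsym -> R -> R;
  rmod : rsym -> R -> R;
  fmod_pos : forall f e, 0 < e -> 0 < fmod f e;
  rmod_pos : forall P e, 0 < e -> 0 < rmod P e;
  fsym_countable : exists g : fsym -> nat, forall x y, g x = g y -> x = y;
  rsym_countable : exists g : rsym -> nat, forall x y, g x = g y -> x = y
}.

Section Syntax.
Variable L : Sig.

(* Terms of L(C): variables x_n, new constants c_n (n : nat, C = {c_i}),
   and applications of function symbols. *)
Inductive term : Type :=
| Var : nat -> term
| Cst : nat -> term
| App : forall f : fsym L, (Fin.t (farity L f) -> term) -> term.

(* Formulas of L_{omega_1,omega}(C).  Variables are named (nat);
   FInf x phi binds x.  FConj Phi is the countable conjunction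
   (infimum) of the countable family {Phi n : n}. *)
Inductive formula : Type :=
| FDist : term -> term -> formula
| FRel : forall P : rsym L, (Fin.t (rarity L P) -> term) -> formula
| FNeg : formula -> formula
| FHalf : formula -> formula
| FPlus : formula -> formula -> formula
| FConj : (nat -> formula) -> formula
| FInf : nat -> formula -> formula.

Definition atomic (phi : formula) : Prop :=
  match phi with FDist _ _ | FRel _ _ => True | _ => False end.

Definition imm_sub (psi phi : formula) : Prop :=
  match phi with
  | FNeg a | FHalf a => psi = a
  | FPlus a b => psi = a \/ psi = b
  | FConj Phi => exists n, psi = Phi n
  | FInf _ a => psi = a
  | _ => False
  end.

Fixpoint term_var (x : nat) (t : term) : Prop :=
  match t with
  | Var y => x = y
  | Cst _ => False
  | App _ ts => exists i, term_var x (ts i)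
  end.

Fixpoint term_cst (c : nat) (t : term) : Prop :=
  match t with
  | Var _ => False
  | Cst d => c = d
  | App _ ts => exists i, term_cst c (ts i)
  end.

Fixpoint free (x : nat) (phi : formula) : Prop :=
  match phi with
  | FDist t1 t2 => term_var x t1 \/ term_var x t2
  | FRel _ ts => exists i, term_var x (ts i)
  | FNeg a | FHalf a => free x a
  | FPlus a b => free x a \/ free x b
  | FConj Phi => exists n, free x (Phi n)
  | FInf y a => x <> y /\ free x a
  end.

Fixpoint occ_cst (c : nat) (phi : formula) : Prop :=
  match phi with
  | FDist t1 t2 => term_cst c t1 \/ term_cst c t2
  | FRel _ ts => exists i, term_cst c (ts i)
  | FNeg a | FHalf a => occ_cst c a
  | FPlus a b => occ_cst c a \/ occ_cst c b
  | FConj Phi => exists n, occ_cst c (Phi n)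
  | FInf _ a => occ_cst c a
  end.

Fixpoint bound_in (y : nat) (phi : formula) : Prop :=
  match phi with
  | FDist _ _ | FRel _ _ => False
  | FNeg a | FHalf a => bound_in y a
  | FPlus a b => bound_in y a \/ bound_in y b
  | FConj Phi => exists n, bound_in y (Phi n)
  | FInf z a => y = z \/ bound_in y a
  end.

Definition sentence (phi : formula) : Prop := forall x, ~ free x phi.

Definition fin_free (phi : formula) : Prop :=
  exists l : list nat, forall x, free x phi -> In x l.

(* phi is a formula of L_{omega_1,omega}: no constant of C occurs, and
   every subformula has only finitely many free variables. *)
Fixpoint hered_fin_free (phi : formula) : Prop :=
  fin_free phi /\
  match phi with
  | FDist _ _ | FRel _ _ => True
  | FNeg a | FHalf a => hered_fin_free a
  | FPlus a b => hered_fin_free a /\ hered_fin_free b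
  | FConj Phi => forall n, hered_fin_free (Phi n)
  | FInf _ a => hered_fin_free a
  end.

Definition Lformula (phi : formula) : Prop :=
  (forall c, ~ occ_cst c phi) /\ hered_fin_free phi.

Definition Lterm (t : term) : Prop := forall c, ~ term_cst c t.

Fixpoint tsubst_t (x : nat) (s : term) (t : term) : term :=
  match t with
  | Var y => if Nat.eq_dec x y then s else Var y
  | Cst c => Cst c
  | App f ts => App f (fun i => tsubst_t x s (ts i))
  end.

Fixpoint tsubst (x : nat) (s : term) (phi : formula) : formula :=
  match phi with
  | FDist t1 t2 => FDist (tsubst_t x s t1) (tsubst_t x s t2)
  | FRel P ts => FRel P (fun i => tsubst_t x s (ts i))
  | FNeg a => FNeg (tsubst x s a)
  | FHalf a => FHalf (tsubst x s a)
  | FPlus a b => FPlus (tsubst x s a) (tsubst x s b)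
  | FConj Phi => FConj (fun n => tsubst x s (Phi n))
  | FInf y a => if Nat.eq_dec x y then FInf y a else FInf y (tsubst x s a)
  end.

Definition countable_fragment (A : formula -> Prop) : Prop :=
  (exists e : nat -> option formula,
      forall phi, A phi -> exists n, e n = Some phi) /\
  (forall phi, A phi -> Lformula phi) /\
  (forall phi, atomic phi -> Lformula phi -> A phi) /\
  (forall phi psi, A phi -> imm_sub psi phi -> A psi) /\
  (forall phi, A phi -> A (FNeg phi)) /\
  (forall phi, A phi -> A (FHalf phi)) /\
  (forall phi psi, A phi -> A psi -> A (FPlus phi psi)) /\
  (forall x phi, A phi -> A (FInf x phi)) /\
  (forall x t phi, A phi -> Lterm t ->
      (forall y, term_var y t -> ~ bound_in y phi) -> A (tsubst x t phi)).

(* Partial substitution of constants of C for variables: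
   rho x = Some c replaces free occurrences of x by c. *)
Definition csub := nat -> option nat.

Definition csub_none : csub := fun _ => None.

Definition csub_upd (rho : csub) (x : nat) (v : option nat) : csub :=
  fun y => if Nat.eq_dec x y then v else rho y.

Fixpoint csubst_t (rho : csub) (t : term) : term :=
  match t with
  | Var y => match rho y with Some c => Cst c | None => Var y end
  | Cst c => Cst c
  | App f ts => App f (fun i => csubst_t rho (ts i))
  end.

Fixpoint csubst (rho : csub) (phi : formula) : formula :=
  match phi with
  | FDist t1 t2 => FDist (csubst_t rho t1) (csubst_t rho t2)
  | FRel P ts => FRel P (fun i => csubst_t rho (ts i))
  | FNeg a => FNeg (csubst rho a)
  | FHalf a => FHalf (csubst rho a)
  | FPlus a b => FPlus (csubst rho a) (csubst rho b)
  | FConj Phi => FConj (fun n => csubst rho (Phi n))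
  | FInf y a => FInf y (csubst (csub_upd rho y None) a)
  end.

Definition inst (x c : nat) (phi : formula) : formula :=
  csubst (csub_upd csub_none x (Some c)) phi.

Definition fin_dom (rho : csub) : Prop :=
  exists l : list nat, forall x, rho x <> None -> In x l.

Definition SigmaC (Sigma : formula -> Prop) (psi : formula) : Prop :=
  exists phi rho, Sigma phi /\ fin_dom rho /\ psi = csubst rho phi.

End Syntax.

Arguments Var {L}.
Arguments Cst {L}.

Record Struc (L : Sig) : Type := {
  carrier :> Type;
  point : carrier;
  dist : carrier -> carrier -> R;
  fint : forall f : fsym L, (Fin.t (farity L f) -> carrier) -> carrier;
  rint : forall P : rsym L, (Fin.t (rarity L P) -> carrier) -> R;
  dist_range : forall x y, 0 <= dist x y <= 1;
  dist_eq : forall x y, dist x y = 0 <-> x = y;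
  dist_sym : forall x y, dist x y = dist y x;
  dist_tri : forall x y z, dist x z <= dist x y + dist y z;
  complete : forall u : nat -> carrier,
      (forall e, 0 < e -> exists N, forall n m, (N <= n)%nat -> (N <= m)%nat ->
          dist (u n) (u m) < e) ->
      exists l, forall e, 0 < e -> exists N, forall n, (N <= n)%nat ->
          dist (u n) l < e;
  fint_unif : forall f e, 0 < e -> forall xs ys,
      (forall i, dist (xs i) (ys i) < fmod L f e) ->
      dist (fint f xs) (fint f ys) <= e;
  rint_range : forall P xs, 0 <= rint P xs <= 1;
  rint_unif : forall P e, 0 < e -> forall xs ys,
      (forall i, dist (xs i) (ys i) < rmod L P e) ->
      Rabs (rint P xs - rint P ys) <= e
}.

Section Semantics.
Variable L : Sig.
Variable M : Struc L.

Fixpoint teval (a : nat -> M) (env : nat -> M) (t : term L) : M :=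
  match t with
  | Var x => env x
  | Cst c => a c
  | App f ts => fint M f (fun i => teval a env (ts i))
  end.

Definition env_upd (env : nat -> M) (x : nat) (m : M) : nat -> M :=
  fun y => if Nat.eq_dec x y then m else env y.

Fixpoint feval (a : nat -> M) (env : nat -> M) (phi : formula L) : R :=
  match phi with
  | FDist t1 t2 => dist M (teval a env t1) (teval a env t2)
  | FRel P ts => rint M P (fun i => teval a env (ts i))
  | FNeg b => 1 - feval a env b
  | FHalf b => / 2 * feval a env b
  | FPlus b c => Rmin (feval a env b + feval a env c) 1
  | FConj Phi => Inf (fun v => exists n, v = feval a env (Phi n))
  | FInf x b => Inf (fun v => exists m : M, v = feval a (env_upd env x m) b)
  end.

End Semantics.

(* An element (M, a_c)_{c in C0} of M(C): M in the class, C0 a finite set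
   of new constants, a_c their interpretations (only a on C0 matters). *)
Record StrucC (L : Sig) : Type := {
  base : Struc L;
  C0 : list nat;
  cint : nat -> base
}.

(* value of a sentence phi in (M, a_c)_{c in C0}, defined when all
   constants of phi lie in C0 *)
Definition sval (L : Sig) (N : StrucC L) (phi : formula L) : R :=
  @feval L (base N) (cint N) (fun _ => point (base N)) phi.

Definition interprets (L : Sig) (N : StrucC L) (phi : formula L) : Prop :=
  forall c, occ_cst c phi -> In c (C0 N).

Section Forcing.
Variable L : Sig.
Variable Mcls : Struc L -> Prop.
Variable Sigma : formula L -> Prop.

(* a (finite) set {phi_1 < r_1, ..., phi_n < r_n} *)
Definition cond := list (formula L * R).

Definition is_condition (p : cond) : Prop :=
  (forall phi r, In (phi, r) p -> SigmaC Sigma phi /\ sentence phi) /\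
  exists N : StrucC L, Mcls (base N) /\
    forall phi r, In (phi, r) p -> interprets N phi /\ sval N phi < r.

Definition cle (p q : cond) : Prop := forall x, In x q -> In x p.

(* H_p(phi) = min{r <= 1 : (phi < r) in p}, or 1; f_p is its
   restriction to atomic sentences *)
Definition Hval (p : cond) (phi : formula L) : R :=
  Inf (fun r => r <= 1 /\ In (phi, r) p).

Definition fval (p : cond) (phi : formula L) : R := Hval p phi.

(* Fenv phi rho p is F_p(phi[rho]), where rho is a
   partial assignment of constants to variables; this is only a device
   making the recursion structural (the clause for inf_x calls F on the
   substitution instance phi(c)). *)
Fixpoint Fenv (phi : formula L) (rho : csub) (p : cond) : R :=
  match phi with
  | FDist _ _ | FRel _ _ => fval p (csubst rho phi)
  | FNeg b => 1 - Inf (fun v => exists q, is_condition q /\ cle q p /\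
                                   v = Fenv b rho q)
  | FHalf b => / 2 * Fenv b rho p
  | FPlus b c => Rmin (Fenv b rho p + Fenv c rho p) 1
  | FConj Phi => Inf (fun v => exists n, v = Fenv (Phi n) rho p)
  | FInf x b => Inf (fun v => exists c : nat,
                       v = Fenv b (csub_upd rho x (Some c)) p)
  end.

Definition Fval (p : cond) (sigma : formula L) : R := Fenv sigma csub_none p.

Definition Fw (p : cond) (phi : formula L) : R :=
  Sup (fun v => exists q, is_condition q /\ cle q p /\
        v = Inf (fun w => exists q', is_condition q' /\ cle q' q /\
                   w = Fval q' phi)).

Definition Hw (p : cond) (phi : formula L) : R :=
  Sup (fun v => exists q, is_condition q /\ cle q p /\
        v = Inf (fun w => exists q', is_condition q' /\ cle q' q /\
                   w = Hval q' phi)).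

End Forcing.

(** For a condition [q], write [m_q(σ)] for the infimum of [σ^N] over the
    models [N] of [q].  Call a valuation [X] of conditions a tracker of [σ]
    if [σ^N <= X_q] for every model [N] of [q], and every model [N] of [q]
    admits extensions [q' <= q] with [X_{q'} <= σ^N + ε].  The infimum of a
    tracker over the extensions of [q] is then [m_q(σ)], so it suffices that
    both [q ↦ H_q(σ)] and [q ↦ F_q(σ)] track [σ].  For [H] one adds the
    clause [σ < σ^N + ε] to [q].  For [F] one argues by induction on [σ]:
    the negation clause is [1 - m_q(σ)] by the previous remark, a sum needs one
    extension per summand, and for [inf_x] a witness in [N] is named by a
    constant occurring neither in [q] nor in [σ]. *)

From Stdlib Require Import Reals Lra Lia List Classical ClassicalEpsilon
  FunctionalExtensionality PropExtensionality.
Open Scope R_scope.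
Set Implicit Arguments.

Lemma Sup_is_lub (E : R -> Prop) : bound E -> (exists x, E x) -> is_lub E (Sup E).
Proof.
  intros hb hne. unfold Sup.
  destruct (excluded_middle_informative _) as [h|h].
  - destruct (completeness E _ _) as [l hl]. exact hl.
  - tauto.
Qed.

Lemma Inf_le (E : R -> Prop) x : bounded_below E -> E x -> Inf E <= x.
Proof.
  intros [m hm] hx. unfold Inf.
  destruct (excluded_middle_informative _) as [_|h].
  - assert (hb : bound (fun y => E (- y))).
    { exists (- m). intros y hy. specialize (hm _ hy). lra. }
    assert (hx' : E (- - x)) by (rewrite Ropp_involutive; exact hx).
    destruct (Sup_is_lub hb (ex_intro _ _ hx')) as [hub _].
    specialize (hub _ hx'). lra.
  - exfalso. apply h. split; [exists m; exact hm | exists x; exact hx].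
Qed.

Lemma Inf_ge (E : R -> Prop) m : (exists x, E x) -> (forall x, E x -> m <= x) -> m <= Inf E.
Proof.
  intros [x hx] hm. unfold Inf.
  destruct (excluded_middle_informative _) as [_|h].
  - assert (hb : bound (fun y => E (- y))).
    { exists (- m). intros y hy. specialize (hm _ hy). lra. }
    assert (hx' : E (- - x)) by (rewrite Ropp_involutive; exact hx).
    destruct (Sup_is_lub hb (ex_intro _ _ hx')) as [_ hlub].
    assert (Sup (fun y => E (- y)) <= - m).
    { apply hlub. intros y hy. specialize (hm _ hy). lra. }
    lra.
  - exfalso. apply h. split; [exists m; exact hm | exists x; exact hx].
Qed.

Lemma Inf_le_nonneg (E : R -> Prop) x : (forall y, E y -> 0 <= y) -> E x -> Inf E <= x.
Proof. intros h. apply Inf_le. exists 0. exact h. Qed.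

Lemma Inf_empty (E : R -> Prop) : ~ (exists x, E x) -> Inf E = 1.
Proof.
  intros h. unfold Inf. destruct (excluded_middle_informative _) as [h'|_]; tauto.
Qed.

Lemma Inf_approx (E : R -> Prop) e : bounded_below E -> (exists x, E x) -> 0 < e ->
  exists x, E x /\ x < Inf E + e.
Proof.
  intros hb hne he. apply NNPP. intros hn.
  assert (Inf E + e <= Inf E); [|lra].
  apply Inf_ge; [exact hne|]. intros x hx.
  apply Rnot_lt_le. intros hlt. apply hn. exists x. split; [exact hx|exact hlt].
Qed.

Lemma Inf_unit (E : R -> Prop) : (exists x, E x) -> (forall x, E x -> 0 <= x <= 1) ->
  0 <= Inf E <= 1.
Proof.
  intros [x hx] h. split.
  - apply Inf_ge; [exists x; exact hx|]. intros y hy. apply h, hy.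
  - apply Rle_trans with x; [|apply h, hx].
    apply Inf_le_nonneg; [intros y hy; apply h, hy | exact hx].
Qed.

Section Substitution.
Variable L : Sig.

Definition csub_comb (s1 s2 : csub) : csub :=
  fun y => match s1 y with Some c => Some c | None => s2 y end.

Lemma csubst_t_none (t : term L) : csubst_t csub_none t = t.
Proof.
  induction t as [n|n|f ts IH]; simpl; auto.
  f_equal. apply functional_extensionality; auto.
Qed.

Lemma csub_upd_none y : csub_upd csub_none y None = csub_none.
Proof.
  apply functional_extensionality; intro z.
  unfold csub_upd, csub_none. destruct Nat.eq_dec; reflexivity.
Qed.

Lemma csubst_none (phi : formula L) : csubst csub_none phi = phi.
Proof.
  induction phi; simpl; rewrite ?csubst_t_none; try congruence.
  - f_equal. apply functional_extensionality; intro; apply csubst_t_none.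
  - f_equal. apply functional_extensionality; auto.
  - rewrite csub_upd_none. congruence.
Qed.

Lemma csubst_t_comb s1 s2 (t : term L) :
  csubst_t s2 (csubst_t s1 t) = csubst_t (csub_comb s1 s2) t.
Proof.
  induction t as [n|n|f ts IH]; simpl; auto.
  - unfold csub_comb. destruct (s1 n); reflexivity.
  - f_equal. apply functional_extensionality; auto.
Qed.

Lemma csub_comb_upd s1 s2 y :
  csub_comb (csub_upd s1 y None) (csub_upd s2 y None) = csub_upd (csub_comb s1 s2) y None.
Proof.
  apply functional_extensionality; intro z.
  unfold csub_comb, csub_upd. destruct Nat.eq_dec; reflexivity.
Qed.

Lemma csubst_comb (phi : formula L) :
  forall s1 s2, csubst s2 (csubst s1 phi) = csubst (csub_comb s1 s2) phi.
Proof.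
  induction phi; intros s1 s2; simpl; rewrite ?csubst_t_comb; try congruence.
  - f_equal. apply functional_extensionality; intro; apply csubst_t_comb.
  - f_equal. apply functional_extensionality; auto.
  - rewrite IHphi, csub_comb_upd. reflexivity.
Qed.

Lemma inst_csubst rho x c (b : formula L) :
  inst x c (csubst (csub_upd rho x None) b) = csubst (csub_upd rho x (Some c)) b.
Proof.
  unfold inst. rewrite csubst_comb. f_equal. apply functional_extensionality; intro z.
  unfold csub_comb, csub_upd, csub_none. destruct Nat.eq_dec; [reflexivity|].
  destruct (rho z); reflexivity.
Qed.

Lemma term_var_csubst rho y (t : term L) :
  term_var y (csubst_t rho t) <-> term_var y t /\ rho y = None.
Proof.
  induction t as [n|n|f ts IH]; simpl.
  - destruct (rho n) eqn:E; simpl.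
    + split; [tauto|]. intros [-> h]. congruence.
    + split; [intros ->; auto|tauto].
  - tauto.
  - split.
    + intros [i hi]. apply IH in hi. destruct hi. split; eauto.
    + intros [[i hi] hr]. exists i. apply IH. auto.
Qed.

Lemma free_csubst (phi : formula L) :
  forall rho y, free y (csubst rho phi) <-> free y phi /\ rho y = None.
Proof.
  induction phi as [t1 t2|P ts|b IH|b IH|b IHb c IHc|Phi IH|x b IH]; intros rho y; simpl.
  - rewrite !term_var_csubst. tauto.
  - split.
    + intros [i hi]. apply term_var_csubst in hi. destruct hi. split; eauto.
    + intros [[i hi] hr]. exists i. apply term_var_csubst. auto.
  - apply IH.
  - apply IH.
  - rewrite IHb, IHc. tauto.
  - split.
    + intros [n hn]. apply IH in hn. destruct hn. split; eauto.
    + intros [[n hn] hr]. exists n. apply IH. auto.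
  - rewrite IH. unfold csub_upd. destruct Nat.eq_dec; subst; tauto.
Qed.

Lemma term_cst_csubst rho c (t : term L) :
  term_cst c (csubst_t rho t) -> term_cst c t \/ exists y, rho y = Some c.
Proof.
  induction t as [n|n|f ts IH]; simpl.
  - destruct (rho n) eqn:E; simpl; intros h; [subst; eauto|tauto].
  - auto.
  - intros [i hi]. destruct (IH i hi); eauto.
Qed.

Lemma occ_cst_csubst (phi : formula L) :
  forall rho c, occ_cst c (csubst rho phi) -> occ_cst c phi \/ exists y, rho y = Some c.
Proof.
  induction phi as [t1 t2|P ts|b IH|b IH|b IHb c IHc|Phi IH|x b IH]; intros rho d; simpl.
  - intros [h|h]; apply term_cst_csubst in h; tauto.
  - intros [i hi]. destruct (term_cst_csubst _ _ _ hi); eauto.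
  - apply IH.
  - apply IH.
  - intros [h|h]; [destruct (IHb _ _ h)|destruct (IHc _ _ h)]; tauto.
  - intros [n hn]. destruct (IH _ _ _ hn); eauto.
  - intros h. destruct (IH _ _ h) as [h'|[y hy]]; [auto|].
    right. exists y. unfold csub_upd in hy. destruct Nat.eq_dec; congruence.
Qed.

Section Evaluation.
Variable M : Struc L.

Definition cst_upd (a : nat -> M) c m : nat -> M :=
  fun d => if Nat.eq_dec c d then m else a d.

Definition csub_env (a env : nat -> M) (rho : csub) : nat -> M :=
  fun y => match rho y with Some c => a c | None => env y end.

Lemma teval_csubst (a env : nat -> M) rho (t : term L) :
  teval M a env (csubst_t rho t) = teval M a (csub_env a env rho) t.
Proof.
  induction t as [n|n|f ts IH]; simpl; auto.
  - unfold csub_env. destruct (rho n); reflexivity.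
  - f_equal. apply functional_extensionality; auto.
Qed.

Lemma csub_env_upd (a env : nat -> M) rho x m :
  csub_env a (env_upd M env x m) (csub_upd rho x None) = env_upd M (csub_env a env rho) x m.
Proof.
  apply functional_extensionality; intro z.
  unfold csub_env, env_upd, csub_upd. destruct Nat.eq_dec; reflexivity.
Qed.

Lemma feval_csubst (phi : formula L) :
  forall (a env : nat -> M) rho, feval M a env (csubst rho phi) = feval M a (csub_env a env rho) phi.
Proof.
  induction phi as [t1 t2|P ts|b IH|b IH|b IHb c IHc|Phi IH|x b IH]; intros a env rho; simpl;
    rewrite ?teval_csubst.
  - reflexivity.
  - f_equal. apply functional_extensionality; intro; apply teval_csubst.
  - rewrite IH. reflexivity.
  - rewrite IH. reflexivity.
  - rewrite IHb, IHc. reflexivity.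
  - f_equal. apply functional_extensionality; intro v. apply propositional_extensionality.
    split; intros [n ->]; exists n; auto.
  - f_equal. apply functional_extensionality; intro v. apply propositional_extensionality.
    split; intros [m ->]; exists m; rewrite IH, csub_env_upd; reflexivity.
Qed.

Lemma teval_cst_upd (a env : nat -> M) c m (t : term L) :
  ~ term_cst c t -> teval M (cst_upd a c m) env t = teval M a env t.
Proof.
  induction t as [n|n|f ts IH]; simpl; intros h; auto.
  - unfold cst_upd. destruct Nat.eq_dec; tauto.
  - f_equal. apply functional_extensionality; intro i. apply IH. intro; apply h; eauto.
Qed.

Lemma feval_cst_upd (phi : formula L) :
  forall (a env : nat -> M) c m, ~ occ_cst c phi -> feval M (cst_upd a c m) env phi = feval M a env phi.
Proof.
  induction phi as [t1 t2|P ts|b IH|b IH|b IHb d IHd|Phi IH|x b IH]; intros a env c m h; simpl in *.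
  - rewrite !teval_cst_upd; tauto.
  - f_equal. apply functional_extensionality; intro i. apply teval_cst_upd. intro; apply h; eauto.
  - rewrite IH; tauto.
  - rewrite IH; tauto.
  - rewrite IHb, IHd; tauto.
  - f_equal. apply functional_extensionality; intro v. apply propositional_extensionality.
    split; intros [n ->]; exists n; [|symmetry]; apply IH; intro; apply h; eauto.
  - f_equal. apply functional_extensionality; intro v. apply propositional_extensionality.
    split; intros [k ->]; exists k; [|symmetry]; apply IH; exact h.
Qed.

Lemma feval_unit (phi : formula L) : forall (a env : nat -> M), 0 <= feval M a env phi <= 1.
Proof.
  induction phi as [t1 t2|P ts|b IH|b IH|b IHb c IHc|Phi IH|x b IH]; intros a env; simpl.
  - apply dist_range.
  - apply rint_range.
  - specialize (IH a env); lra.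
  - specialize (IH a env); lra.
  - specialize (IHb a env); specialize (IHc a env).
    unfold Rmin; destruct Rle_dec; lra.
  - apply Inf_unit; [exists (feval M a env (Phi 0%nat)); eauto|]. intros v [n ->]; auto.
  - apply Inf_unit; [exists (feval M a (env_upd M env x (point M)) b); eauto|].
    intros v [m ->]; auto.
Qed.

End Evaluation.
End Substitution.

Section Forcing.
Variable L : Sig.
Variable Mcls : Struc L -> Prop.
Variable Sigma : formula L -> Prop.

Notation isc := (is_condition Mcls Sigma).
Notation F := (Fenv Mcls Sigma).

Definition models (q : cond L) (N : StrucC L) : Prop :=
  Mcls (base N) /\ forall phi r, In (phi, r) q -> interprets N phi /\ sval N phi < r.

Lemma condition_model q : isc q -> exists N, models q N.
Proof. intros [_ h]. exact h. Qed.

Lemma cle_refl (q : cond L) : cle q q.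
Proof. intros x h. exact h. Qed.

Lemma cle_trans (q1 q2 q3 : cond L) : cle q1 q2 -> cle q2 q3 -> cle q1 q3.
Proof. unfold cle. auto. Qed.

Lemma models_cle q q' N : cle q' q -> models q' N -> models q N.
Proof. intros hc [hM hN]. split; [exact hM|]. intros phi r hin. apply hN, hc, hin. Qed.

Lemma sval_unit (N : StrucC L) phi : 0 <= sval N phi <= 1.
Proof. apply feval_unit. Qed.

Lemma sval_le_Hval q N phi : models q N -> sval N phi <= Hval q phi.
Proof.
  intros [_ hN]. unfold Hval.
  destruct (classic (exists r, r <= 1 /\ In (phi, r) q)) as [h|h].
  - apply Inf_ge; [exact h|]. intros r [_ hr]. apply Rlt_le, hN, hr.
  - rewrite Inf_empty by exact h. apply sval_unit.
Qed.

Lemma Hval_unit q phi : isc q -> 0 <= Hval q phi <= 1.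
Proof.
  intros hq. destruct (condition_model hq) as [N hN].
  pose proof (sval_le_Hval phi hN). pose proof (sval_unit N phi).
  unfold Hval in *.
  destruct (classic (exists r, r <= 1 /\ In (phi, r) q)) as [h|h].
  - split; [lra|]. destruct h as [r [hr hin]].
    apply Rle_trans with r; [|exact hr].
    apply Inf_le_nonneg; [|split; assumption].
    intros s [_ hs]. destruct hN as [_ hN]. pose proof (proj2 (hN _ _ hs)). lra.
  - rewrite Inf_empty by exact h. lra.
Qed.

Lemma Hval_le_clause q phi r : isc q -> In (phi, r) q -> r <= 1 -> Hval q phi <= r.
Proof.
  intros hq hin hr. destruct (condition_model hq) as [N [_ hN]].
  apply Inf_le_nonneg; [|split; assumption].
  intros s [_ hs]. pose proof (proj2 (hN _ _ hs)). pose proof (sval_unit N phi). lra.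
Qed.

Lemma Hval_antitone phi q q' : isc q -> isc q' -> cle q' q -> Hval q' phi <= Hval q phi.
Proof.
  intros hq hq' hc. unfold Hval at 2.
  destruct (classic (exists r, r <= 1 /\ In (phi, r) q)) as [h|h].
  - apply Inf_ge; [exact h|]. intros r [hr hin]. apply Hval_le_clause; auto.
  - rewrite Inf_empty by exact h. apply Hval_unit, hq'.
Qed.

(* The negation clause of [F] and the inner infima of [F^w] and [H^w] have this form. *)
Definition ext_inf (X : cond L -> R) (q : cond L) : R :=
  Inf (fun v => exists q', isc q' /\ cle q' q /\ v = X q').

Lemma ext_inf_unit X q :
  (forall q', isc q' -> 0 <= X q' <= 1) -> isc q -> 0 <= ext_inf X q <= 1.
Proof.
  intros hX hq. apply Inf_unit.
  - exists (X q), q. split; [exact hq | split; [apply cle_refl | reflexivity]].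
  - intros v [q' [hq' [_ ->]]]. apply hX, hq'.
Qed.

Lemma ext_inf_antitone X q q' :
  (forall q0, isc q0 -> 0 <= X q0) -> isc q' -> cle q' q -> ext_inf X q <= ext_inf X q'.
Proof.
  intros hX hq' hc. apply Inf_ge.
  - exists (X q'), q'. split; [exact hq' | split; [apply cle_refl | reflexivity]].
  - intros v [q0 [hq0 [hc0 ->]]]. apply Inf_le_nonneg.
    + intros w [q1 [hq1 [_ ->]]]. apply hX, hq1.
    + exists q0. split; [exact hq0 | split; [eapply cle_trans; eauto | reflexivity]].
Qed.

Lemma Fenv_unit phi : forall rho q, isc q -> 0 <= F phi rho q <= 1.
Proof.
  induction phi as [t1 t2|P ts|b IH|b IH|b IHb c IHc|Phi IH|x b IH]; intros rho q hq; simpl.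
  - apply Hval_unit, hq.
  - apply Hval_unit, hq.
  - pose proof (ext_inf_unit (F b rho) (fun q' hq' => IH rho q' hq') hq).
    unfold ext_inf in *. lra.
  - specialize (IH rho q hq); lra.
  - specialize (IHb rho q hq); specialize (IHc rho q hq).
    unfold Rmin; destruct Rle_dec; lra.
  - apply Inf_unit; [exists (F (Phi 0%nat) rho q); eauto|]. intros v [n ->]. auto.
  - apply Inf_unit; [exists (F b (csub_upd rho x (Some 0%nat)) q); eauto|].
    intros v [c ->]. auto.
Qed.

Lemma Fenv_nonneg phi rho q : isc q -> 0 <= F phi rho q.
Proof. intros hq. apply (Fenv_unit phi rho hq). Qed.

Lemma Fenv_antitone phi : forall rho q q', isc q -> isc q' -> cle q' q -> F phi rho q' <= F phi rho q.
Proof.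
  induction phi as [t1 t2|P ts|b IH|b IH|b IHb c IHc|Phi IH|x b IH];
    intros rho q q' hq hq' hc; simpl.
  - apply Hval_antitone; assumption.
  - apply Hval_antitone; assumption.
  - pose proof (ext_inf_antitone (F b rho) (Fenv_nonneg b rho) hq' hc).
    unfold ext_inf in *. lra.
  - specialize (IH rho q q' hq hq' hc); lra.
  - specialize (IHb rho q q' hq hq' hc); specialize (IHc rho q q' hq hq' hc).
    unfold Rmin; repeat destruct Rle_dec; lra.
  - apply Inf_ge; [exists (F (Phi 0%nat) rho q); eauto|]. intros v [n ->].
    apply Rle_trans with (F (Phi n) rho q'); [|auto].
    apply Inf_le_nonneg; [|eauto]. intros w [k ->]. apply Fenv_nonneg, hq'.
  - apply Inf_ge; [exists (F b (csub_upd rho x (Some 0%nat)) q); eauto|]. intros v [c ->].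
    apply Rle_trans with (F b (csub_upd rho x (Some c)) q'); [|auto].
    apply Inf_le_nonneg; [|eauto]. intros w [k ->]. apply Fenv_nonneg, hq'.
Qed.

Definition model_inf (q : cond L) (sigma : formula L) : R :=
  Inf (fun v => exists N, models q N /\ v = sval N sigma).

Lemma model_inf_le q N sigma : models q N -> model_inf q sigma <= sval N sigma.
Proof.
  intros hN. apply Inf_le_nonneg; [|eauto]. intros v [N' [_ ->]]. apply sval_unit.
Qed.

Definition tracks (X : cond L -> R) (sigma : formula L) : Prop :=
  (forall q N, isc q -> models q N -> sval N sigma <= X q) /\
  (forall q N e, isc q -> models q N -> 0 < e ->
     exists q', isc q' /\ cle q' q /\ X q' <= sval N sigma + e).

Lemma ext_inf_tracks X sigma q :
  (forall q', isc q' -> 0 <= X q') -> tracks X sigma -> isc q ->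
  ext_inf X q = model_inf q sigma.
Proof.
  intros hX [hup happrox] hq. apply Rle_antisym.
  - apply Inf_ge; [destruct (condition_model hq) as [N hN]; eauto|].
    intros v [N [hN ->]]. apply Rle_plus_epsilon. intros e he.
    destruct (happrox q N e hq hN he) as [q' [hq' [hc hle]]].
    apply Rle_trans with (X q'); [|exact hle].
    apply Inf_le_nonneg.
    + intros w [q0 [hq0 [_ ->]]]. apply hX, hq0.
    + exists q'. auto.
  - apply Inf_ge.
    + exists (X q), q. split; [exact hq | split; [apply cle_refl | reflexivity]].
    + intros v [q' [hq' [hc ->]]]. destruct (condition_model hq') as [N hN].
      apply Rle_trans with (sval N sigma).
      * apply model_inf_le, (models_cle hc hN).
      * apply hup; assumption.
Qed.

Section Fragment.
Hypothesis Sigma_no_cst : forall phi, Sigma phi -> forall c, ~ occ_cst c phi.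
Hypothesis Sigma_sub_closed : forall phi psi, Sigma phi -> imm_sub psi phi -> Sigma psi.

Lemma csub_bound (rho : csub) (l : list nat) :
  exists B, forall y, In y l -> forall c, rho y = Some c -> (c < B)%nat.
Proof.
  induction l as [|y l [B hB]].
  - exists 0%nat. intros y [].
  - destruct (rho y) as [c|] eqn:E.
    + exists (Nat.max B (S c)). intros z [<-|hz] d hd.
      * rewrite E in hd. injection hd as <-. lia.
      * specialize (hB _ hz _ hd). lia.
    + exists B. intros z [<-|hz] d hd; [congruence|eauto].
Qed.

Lemma SigmaC_cst_bound psi : SigmaC Sigma psi -> exists B, forall c, occ_cst c psi -> (c < B)%nat.
Proof.
  intros [phi [rho [hs [[l hl] ->]]]].
  destruct (csub_bound rho l) as [B hB]. exists B. intros c hc.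
  destruct (occ_cst_csubst _ _ _ hc) as [h|[y hy]].
  - exfalso. exact (Sigma_no_cst hs c h).
  - apply (hB y); [apply hl; congruence | exact hy].
Qed.

Lemma cond_cst_bound (q : cond L) : (forall phi r, In (phi, r) q -> SigmaC Sigma phi) ->
  exists B, forall phi r c, In (phi, r) q -> occ_cst c phi -> (c < B)%nat.
Proof.
  induction q as [|[phi r] q IH]; intros h.
  - exists 0%nat. intros ? ? ? [].
  - destruct IH as [B hB]; [intros; eapply h; right; eauto|].
    destruct (SigmaC_cst_bound (h phi r (or_introl eq_refl))) as [B' hB'].
    exists (Nat.max B B'). intros psi s c [e|hin] hc.
    + injection e as -> ->. specialize (hB' _ hc). lia.
    + specialize (hB _ _ _ hin hc). lia.
Qed.

(* [N] is enlarged to interpret the (finitely many) constants of [psi]. *)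
Lemma models_add_clause q N psi r :
  isc q -> models q N -> SigmaC Sigma psi -> sentence psi -> sval N psi < r ->
  exists N', isc ((psi, r) :: q) /\ models ((psi, r) :: q) N' /\
    forall phi, sval N' phi = sval N phi.
Proof.
  intros [hqS _] [hM hN] hs hse hr.
  destruct (SigmaC_cst_bound hs) as [B hB].
  set (N' := Build_StrucC (base N) (seq 0 B ++ C0 N) (cint N)).
  assert (hN' : models ((psi, r) :: q) N').
  { split; [exact hM|]. intros phi s [e|hin].
    - injection e as -> ->. split; [|exact hr].
      intros c hc. apply in_or_app. left. apply in_seq. specialize (hB _ hc). lia.
    - destruct (hN _ _ hin) as [h1 h2]. split; [|exact h2].
      intros c hc. apply in_or_app. right. auto. }
  exists N'. split; [|split; [exact hN'|reflexivity]].
  split; [|exists N'; exact hN'].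
  intros phi s [e|hin].
  - injection e as -> ->. auto.
  - eauto.
Qed.

Lemma models_fresh_cst q N c (m : base N) (B : nat) :
  models q N -> (forall phi r d, In (phi, r) q -> occ_cst d phi -> (d < B)%nat) -> (B <= c)%nat ->
  models q (Build_StrucC (base N) (c :: C0 N) (cst_upd (base N) (cint N) c m)).
Proof.
  intros [hM hN] hB hc. split; [exact hM|]. intros phi r hin.
  destruct (hN _ _ hin) as [h1 h2]. split.
  - intros d hd. right. auto.
  - unfold sval; simpl. rewrite feval_cst_upd; [exact h2|].
    intro h. specialize (hB _ _ _ hin h). lia.
Qed.

Lemma SigmaC_neg psi : SigmaC Sigma (FNeg psi) -> SigmaC Sigma psi.
Proof.
  intros [phi [rho [hs [hf e]]]]. destruct phi; try discriminate.
  injection e as ->. exists phi, rho. repeat split; auto.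
  eapply Sigma_sub_closed; [exact hs | reflexivity].
Qed.

Lemma SigmaC_half psi : SigmaC Sigma (FHalf psi) -> SigmaC Sigma psi.
Proof.
  intros [phi [rho [hs [hf e]]]]. destruct phi; try discriminate.
  injection e as ->. exists phi, rho. repeat split; auto.
  eapply Sigma_sub_closed; [exact hs | reflexivity].
Qed.

Lemma SigmaC_plus psi chi : SigmaC Sigma (FPlus psi chi) -> SigmaC Sigma psi /\ SigmaC Sigma chi.
Proof.
  intros [phi [rho [hs [hf e]]]]. destruct phi; try discriminate.
  injection e as -> ->. split.
  - exists phi1, rho. repeat split; auto. eapply Sigma_sub_closed; [exact hs | left; reflexivity].
  - exists phi2, rho. repeat split; auto. eapply Sigma_sub_closed; [exact hs | right; reflexivity].
Qed.

Lemma SigmaC_conj Psi n : SigmaC Sigma (FConj Psi) -> SigmaC Sigma (Psi n).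
Proof.
  intros [phi [rho [hs [hf e]]]]. destruct phi as [| | | | |Phi|]; try discriminate.
  injection e as e. rewrite e. exists (Phi n), rho. repeat split; auto.
  eapply Sigma_sub_closed; [exact hs | exists n; reflexivity].
Qed.

Lemma SigmaC_inf rho x b c : SigmaC Sigma (csubst rho (FInf x b)) ->
  SigmaC Sigma (csubst (csub_upd rho x (Some c)) b).
Proof.
  intros [phi [rho0 [hs [[l hl] e]]]]. destruct phi; try discriminate.
  injection e as <- e.
  exists phi, (csub_upd rho0 x (Some c)). repeat split.
  - eapply Sigma_sub_closed; [exact hs | reflexivity].
  - exists (x :: l). intros z hz. unfold csub_upd in hz.
    destruct Nat.eq_dec; [left; auto | right; auto].
  - rewrite <- (inst_csubst rho x c b), <- (inst_csubst rho0 x c phi), e. reflexivity.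
Qed.

Lemma sentence_inf rho x (b : formula L) c : sentence (csubst rho (FInf x b)) ->
  sentence (csubst (csub_upd rho x (Some c)) b).
Proof.
  intros hs y hy. apply free_csubst in hy. destruct hy as [h1 h2].
  apply (hs y). simpl. unfold csub_upd in h2. destruct Nat.eq_dec; [discriminate|].
  split; [auto|]. apply free_csubst. split; [exact h1|].
  unfold csub_upd. destruct Nat.eq_dec; [congruence | exact h2].
Qed.

Lemma sval_inst (N : StrucC L) rho x (b : formula L) c :
  sval N (csubst (csub_upd rho x (Some c)) b) =
  feval (base N) (cint N) (env_upd (base N) (fun _ => point (base N)) x (cint N c))
    (csubst (csub_upd rho x None) b).
Proof.
  unfold sval. rewrite <- inst_csubst. unfold inst. rewrite feval_csubst. f_equal.
  apply functional_extensionality; intro z. unfold csub_env, env_upd, csub_upd, csub_none.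
  destruct Nat.eq_dec; reflexivity.
Qed.


Lemma Hval_tracks psi : SigmaC Sigma psi -> sentence psi -> tracks (fun q => Hval q psi) psi.
Proof.
  intros hs hse. split.
  - intros q N _ hN. apply sval_le_Hval, hN.
  - intros q N e hq hN he.
    destruct (models_add_clause hq hN hs hse (r := sval N psi + e) ltac:(lra)) as [_ [hq' _]].
    exists ((psi, sval N psi + e) :: q).
    split; [exact hq' | split; [intros z hz; right; exact hz|]].
    destruct (Rle_or_lt (sval N psi + e) 1) as [h|h].
    + apply Hval_le_clause; [exact hq' | left; reflexivity | exact h].
    + pose proof (Hval_unit psi hq'). lra.
Qed.

Lemma tracks_neg X sigma :
  (forall q, isc q -> 0 <= X q) -> tracks X sigma ->
  SigmaC Sigma (FNeg sigma) -> sentence (FNeg sigma) ->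
  tracks (fun q => 1 - ext_inf X q) (FNeg sigma).
Proof.
  intros hX hT hs hse. split.
  - intros q N hq hN. rewrite (ext_inf_tracks hX hT hq).
    pose proof (model_inf_le sigma hN).
    change (1 - sval N sigma <= 1 - model_inf q sigma). lra.
  - intros q N e hq hN he.
    set (r := 1 - sval N sigma + e).
    destruct (models_add_clause hq hN hs hse (r := r) ltac:(change (1 - sval N sigma < r); unfold r; lra))
      as [_ [hq' _]].
    exists ((FNeg sigma, r) :: q).
    split; [exact hq' | split; [intros z hz; right; exact hz|]].
    rewrite (ext_inf_tracks hX hT hq').
    assert (sval N sigma - e <= model_inf ((FNeg sigma, r) :: q) sigma).
    { apply Inf_ge; [destruct (condition_model hq') as [N0 hN0]; eauto|].
      intros v [N0 [[_ hN0] ->]]. destruct (hN0 _ _ (or_introl eq_refl)) as [_ hr].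
      change (1 - sval N0 sigma < r) in hr. unfold r in hr. lra. }
    change (1 - model_inf ((FNeg sigma, r) :: q) sigma <= 1 - sval N sigma + e). lra.
Qed.

Lemma tracks_half X sigma : tracks X sigma -> tracks (fun q => / 2 * X q) (FHalf sigma).
Proof.
  intros [hup happrox]. split.
  - intros q N hq hN. specialize (hup q N hq hN).
    change (/ 2 * sval N sigma <= / 2 * X q). lra.
  - intros q N e hq hN he. destruct (happrox q N e hq hN he) as [q' [hq' [hc hle]]].
    exists q'. split; [exact hq' | split; [exact hc|]].
    change (/ 2 * X q' <= / 2 * sval N sigma + e). lra.
Qed.

(* First bring [X] close to [sigma^N], using a model of the extension in which
   [tau] is still below [tau^N + e/3]; then bring [Y] close in a further
   extension, which keeps [X] small by antitonicity. *)
Lemma tracks_plus X Y sigma tau :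
  (forall q q', isc q -> isc q' -> cle q' q -> X q' <= X q) ->
  tracks X sigma -> tracks Y tau -> SigmaC Sigma tau -> sentence tau ->
  tracks (fun q => Rmin (X q + Y q) 1) (FPlus sigma tau).
Proof.
  intros hXanti [hupX happroxX] [hupY happroxY] hs hse. split.
  - intros q N hq hN. specialize (hupX q N hq hN). specialize (hupY q N hq hN).
    change (Rmin (sval N sigma + sval N tau) 1 <= Rmin (X q + Y q) 1).
    unfold Rmin; repeat destruct Rle_dec; lra.
  - intros q N e hq hN he.
    set (r := sval N tau + e / 3).
    destruct (models_add_clause hq hN hs hse (r := r) ltac:(unfold r; lra))
      as [N0 [hq0 [hN0 hval0]]].
    destruct (happroxX _ N0 (e / 3) hq0 hN0 ltac:(lra)) as [q1 [hq1 [hc1 hX1]]].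
    rewrite hval0 in hX1.
    destruct (condition_model hq1) as [N1 hN1].
    assert (hr1 : sval N1 tau < r) by (apply (proj2 hN1 tau r), hc1; left; reflexivity).
    destruct (happroxY _ N1 (e / 3) hq1 hN1 ltac:(lra)) as [q2 [hq2 [hc2 hY2]]].
    pose proof (hXanti q1 q2 hq1 hq2 hc2).
    exists q2. split; [exact hq2 | split; [intros z hz; apply hc2, hc1; right; exact hz|]].
    change (Rmin (X q2 + Y q2) 1 <= Rmin (sval N sigma + sval N tau) 1 + e).
    unfold r in hr1. unfold Rmin; repeat destruct Rle_dec; lra.
Qed.

Lemma tracks_conj (X : nat -> cond L -> R) (sigma : nat -> formula L) :
  (forall n q, isc q -> 0 <= X n q) -> (forall n, tracks (X n) (sigma n)) ->
  tracks (fun q => Inf (fun v => exists n, v = X n q)) (FConj sigma).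
Proof.
  intros hX hT. split.
  - intros q N hq hN.
    change (Inf (fun v => exists n, v = sval N (sigma n)) <= Inf (fun v => exists n, v = X n q)).
    apply Inf_ge; [exists (X 0%nat q), 0%nat; reflexivity|]. intros v [n ->].
    apply Rle_trans with (sval N (sigma n)).
    + apply Inf_le_nonneg; [|eauto]. intros w [k ->]. apply sval_unit.
    + apply (proj1 (hT n)); assumption.
  - intros q N e hq hN he.
    destruct (@Inf_approx (fun v => exists n, v = sval N (sigma n)) (e / 2)) as [v [[n ->] hv]].
    + exists 0. intros w [k ->]. apply sval_unit.
    + exists (sval N (sigma 0%nat)), 0%nat. reflexivity.
    + lra.
    + destruct (proj2 (hT n) q N (e / 2) hq hN ltac:(lra)) as [q' [hq' [hc hle]]].
      exists q'. split; [exact hq' | split; [exact hc|]].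
      change (Inf (fun v => exists n, v = X n q') <=
              Inf (fun v => exists n, v = sval N (sigma n)) + e).
      apply Rle_trans with (X n q'); [|lra].
      apply Inf_le_nonneg; [|eauto]. intros w [k ->]. apply hX, hq'.
Qed.

(* A value of [inf_x b] in [N], attained up to [e/2] at some [m], is
   transferred to the instance [b(c)] for a constant [c] fresh for [q] and
   [sigma], interpreted by [m]. *)
Lemma tracks_inf (X : nat -> cond L -> R) rho x b :
  (forall c q, isc q -> 0 <= X c q) ->
  (forall c, tracks (X c) (csubst (csub_upd rho x (Some c)) b)) ->
  SigmaC Sigma (csubst rho (FInf x b)) ->
  tracks (fun q => Inf (fun v => exists c, v = X c q)) (csubst rho (FInf x b)).
Proof.
  intros hX hT hs.
  set (beta := csubst (csub_upd rho x None) b).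
  set (val := fun (N : StrucC L) (m : base N) =>
                feval (base N) (cint N) (env_upd (base N) (fun _ => point (base N)) x m) beta).
  assert (hval : forall N, sval N (csubst rho (FInf x b)) = Inf (fun v => exists m, v = val N m))
    by reflexivity.
  assert (hval_unit : forall N (m : base N), 0 <= val N m) by (intros; apply feval_unit).
  split.
  - intros q N hq hN. rewrite hval.
    apply Inf_ge; [exists (X 0%nat q), 0%nat; reflexivity|]. intros v [c ->].
    apply Rle_trans with (sval N (csubst (csub_upd rho x (Some c)) b)).
    + rewrite sval_inst. apply Inf_le_nonneg; [|exists (cint N c); reflexivity].
      intros w [k ->]. apply hval_unit.
    + apply (proj1 (hT c)); assumption.
  - intros q N e hq hN he.
    destruct (@Inf_approx (fun v => exists m, v = val N m) (e / 2)) as [v [[m ->] hm]].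
    + exists 0. intros w [k ->]. apply hval_unit.
    + exists (val N (point (base N))). eauto.
    + lra.
    + destruct (cond_cst_bound q) as [B1 hB1]; [intros phi r hin; exact (proj1 (proj1 hq _ _ hin))|].
      destruct (SigmaC_cst_bound hs) as [B2 hB2].
      set (c := Nat.max B1 B2).
      set (N' := Build_StrucC (base N) (c :: C0 N) (cst_upd (base N) (cint N) c m)).
      assert (hN' : models q N') by (apply (models_fresh_cst m hN hB1); unfold c; lia).
      destruct (proj2 (hT c) q N' (e / 2) hq hN' ltac:(lra)) as [q' [hq' [hc hle]]].
      assert (hc_fresh : sval N' (csubst (csub_upd rho x (Some c)) b) = val N m).
      { rewrite sval_inst. simpl. unfold cst_upd at 2. destruct Nat.eq_dec; [|congruence].
        apply feval_cst_upd. intro hocc. specialize (hB2 c hocc). unfold c in hB2. lia. }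
      exists q'. split; [exact hq' | split; [exact hc|]].
      rewrite hval. apply Rle_trans with (X c q'); [|lra].
      apply Inf_le_nonneg; [|eauto]. intros w [k ->]. apply hX, hq'.
Qed.

Lemma Fenv_tracks phi : forall rho, SigmaC Sigma (csubst rho phi) -> sentence (csubst rho phi) ->
  tracks (F phi rho) (csubst rho phi).
Proof.
  induction phi as [t1 t2|P ts|b IH|b IH|b IHb c IHc|Phi IH|x b IH]; intros rho hs hse.
  - exact (Hval_tracks hs hse).
  - exact (Hval_tracks hs hse).
  - exact (tracks_neg (Fenv_nonneg b rho) (IH rho (SigmaC_neg hs) hse) hs hse).
  - exact (tracks_half (IH rho (SigmaC_half hs) hse)).
  - destruct (SigmaC_plus hs) as [hsb hsc].
    assert (hsec : sentence (csubst rho c)) by (intros y hy; apply (hse y); right; exact hy).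
    refine (tracks_plus (Fenv_antitone b rho) (IHb rho hsb _) (IHc rho hsc hsec) hsc hsec).
    intros y hy. apply (hse y). left. exact hy.
  - refine (tracks_conj (fun n => F (Phi n) rho) (fun n => csubst rho (Phi n))
              (fun n => Fenv_nonneg (Phi n) rho) (fun n => IH n rho (SigmaC_conj n hs) _)).
    intros y hy. apply (hse y). exists n. exact hy.
  - exact (tracks_inf (fun c => F b (csub_upd rho x (Some c))) (fun c => Fenv_nonneg b _)
             (fun c => IH _ (SigmaC_inf c hs) (sentence_inf c hse)) hs).
Qed.

Lemma Fw_eq_Hw p sigma : SigmaC Sigma sigma -> sentence sigma ->
  Fw Mcls Sigma p sigma = Hw Mcls Sigma p sigma.
Proof.
  intros hs hse.
  assert (hF : tracks (fun q => Fval Mcls Sigma q sigma) sigma).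
  { pose proof (Fenv_tracks sigma csub_none) as h. rewrite csubst_none in h. exact (h hs hse). }
  assert (hext : forall q, isc q ->
            ext_inf (fun q' => Fval Mcls Sigma q' sigma) q = ext_inf (fun q' => Hval q' sigma) q).
  { intros q hq.
    rewrite (ext_inf_tracks (X := fun q' => Fval Mcls Sigma q' sigma)
               (fun q' hq' => Fenv_nonneg sigma csub_none hq') hF hq).
    rewrite (ext_inf_tracks (fun q' hq' => proj1 (Hval_unit sigma hq')) (Hval_tracks hs hse) hq).
    reflexivity. }
  unfold Fw, Hw. f_equal. apply functional_extensionality; intro v.
  apply propositional_extensionality.
  split; intros [q [hq [hc ->]]]; exists q; (split; [exact hq | split; [exact hc|]]).
  - exact (hext q hq).
  - symmetry. exact (hext q hq).
Qed.

End Fragment.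
End Forcing.

Theorem proposition3p4 :
  forall (L : Sig) (Mcls : Struc L -> Prop)
         (A : formula L -> Prop) (Sigma : formula L -> Prop),
    countable_fragment A ->
    (forall phi, Sigma phi -> A phi) ->
    (forall phi, atomic phi -> Lformula phi -> Sigma phi) ->
    (forall phi psi, Sigma phi -> imm_sub psi phi -> Sigma psi) ->
    forall (p : cond L) (sigma : formula L),
      is_condition Mcls Sigma p ->
      SigmaC Sigma sigma -> sentence sigma ->
      Fw Mcls Sigma p sigma = Hw Mcls Sigma p sigma.
Proof.
  intros L Mcls A Sigma [_ [hAL _]] hSA _ hSub p sigma _ hs hse.
  apply Fw_eq_Hw; [|exact hSub|exact hs|exact hse].
  intros phi hphi. exact (proj1 (hAL phi (hSA phi hphi))).
Qed.
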